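(* Let $p\in(0,1]$ and let $\mathcal{D}$ be a distribution supported on $[0,1]$ with $Q=\sup\{y:\Pr_{x\sim\mathcal{D}}(x\le y)\le p\}$. Consider the scoring rule $f_p$ in which each voter gives $\sum_{\ell=k}^m\binom{m}{\ell}(1-p)^\ell p^{m-\ell}$ points to the alternative she ranks in position $k$ (selecting an alternative with largest total score, ties broken arbitrarily). Then for all $n,m$ and every preference profile $\sigma$, $\mathbb{E}[\mathrm{sw}(f_p(\sigma),u)]\ge(1-p)Q\max_{j\in A}\mathbb{E}[\mathrm{sw}(j,u)]$.
   Context: There are $n$ voters and $m$ alternatives $A=\{1,\dots,m\}$. A preference profile $\sigma$ consists of a ranking of $A$ for each voter; position $1$ is the top. Given $\mathcal{D}$ and $\sigma$, a random utility profile $u$ consistent with $\sigma$ is generated as follows: independently for each voter $i$, draw $m$ i.i.d. samples from $\mathcal{D}$ and assign them, from highest to lowest, to the alternatives in the order of voter $i$'s ranking. The social welfare of $j$ is $\mathrm{sw}(j,u)=\sum_i u_{ij}$; expectations are over $u$. *)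

From HB Require Import structures.
From mathcomp Require Import all_boot all_order all_algebra fingroup perm.
From mathcomp Require Import all_classical all_reals all_analysis.
Set Implicit Arguments. Unset Strict Implicit. Unset Printing Implicit Defensive.
Import Order.TTheory GRing.Theory Num.Theory.
Local Open Scope ring_scope.
Local Open Scope classical_set_scope.
Local Open Scope ereal_scope.

(* Alternatives are 'I_m (alternative j+1 of the paper is j : 'I_m).
   A preference profile is sigma : 'I_n -> {perm 'I_m}, where (sigma i) k is
   the alternative that voter i ranks at (0-indexed) position k, i.e. at
   paper position k+1.  The position of alternative j for voter i is
   (sigma i)^-1 j. *)
Definition profile (n m : nat) := 'I_n -> {perm 'I_m}.

Section Model.
Variable R : realType.
Variable D : probability R R.

(* Expectation of g(x_1,...,x_k) where x_1..x_k are i.i.d. samples from D,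
   written as the iterated integral (Tonelli) w.r.t. the product measure D^k. *)
Fixpoint iid_expect (k : nat) (g : seq R -> \bar R) : \bar R :=
  if k is k'.+1 then \int[D]_x iid_expect k' (fun s => g (x :: s))
  else g [::].

Variables (n m : nat).

Definition voter_samples (s : seq R) (i : 'I_n) : seq R :=
  take m (drop (i * m) s).

(* Utility profile consistent with sigma: voter i's samples sorted from
   highest to lowest are assigned to alternatives in the order of its ranking. *)
Definition utility (sigma : profile n m) (s : seq R) (i : 'I_n) (j : 'I_m) : R :=
  nth 0%R (sort (fun x y : R => (y <= x)%R) (voter_samples s i))
      ((sigma i)^-1%g j).

Definition sw (sigma : profile n m) (s : seq R) (j : 'I_m) : R :=
  (\sum_(i < n) utility sigma s i j)%R.

Definition expected_sw (sigma : profile n m) (j : 'I_m) : \bar R :=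
  iid_expect (n * m) (fun s => (sw sigma s j)%:E).

End Model.

(* Scoring rule f_p: points to the alternative in (0-indexed) position k,
   i.e. paper position k+1: sum_{l=k+1}^m C(m,l) (1-p)^l p^(m-l). *)
Definition fp_points (R : realType) (p : R) (m k : nat) : R :=
  (\sum_(k.+1 <= l < m.+1) 'C(m, l)%:R * (1 - p) ^+ l * p ^+ (m - l))%R.

Definition fp_score (R : realType) (p : R) (n m : nat) (sigma : profile n m)
    (j : 'I_m) : R :=
  (\sum_(i < n) fp_points p m ((sigma i)^-1%g j))%R.

(* f_p(sigma) may be any alternative of maximal total score (arbitrary ties). *)
Definition fp_winner (R : realType) (p : R) (n m : nat) (sigma : profile n m)
    (w : 'I_m) : Prop :=
  forall j : 'I_m, (fp_score p sigma j <= fp_score p sigma w)%R.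

Definition quantileQ (R : realType) (D : probability R R) (p : R) : \bar R :=
  ereal_sup [set y%:E | y in [set y : R | D [set` `]-oo, y]] <= p%:E]].

(* Under f_p, position k earns P[Bin(m, 1 - p) > k]; these points sum to
   E[Bin(m, 1 - p)] = m (1 - p) per voter, so the winner w scores at least
   n (1 - p).  For a threshold t below Q, a sample is at least t with
   probability q_t >= 1 - p.  The k-th largest of a voter's m samples is at
   least t as soon as more than k samples are at least t, which happens with
   probability P[Bin(m, q_t) > k] >= P[Bin(m, 1 - p) > k]; summing over the
   voters, E[sw(w)] >= t * score(w) >= t n (1 - p).  Letting t tend to Q and
   bounding E[sw(j)] <= n (utilities lie in [0, 1]) gives the claim. *)

From HB Require Import structures.
From mathcomp Require Import all_boot all_order all_algebra fingroup perm.
From mathcomp Require Import all_classical all_reals all_analysis.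
From mathcomp Require Import measurable_realfun lra ring.
Import Order.TTheory GRing.Theory Num.Theory.
Local Open Scope ring_scope.
Local Open Scope classical_set_scope.
Local Open Scope ereal_scope.

Section bernoulli_expectation.
Local Open Scope ring_scope.
Context {R : comPzRingType}.
Implicit Types (q : R) (G : seq bool -> R).

Fixpoint bern_expect q (k : nat) G : R :=
  if k is k'.+1 then
    q * bern_expect q k' (fun b => G (true :: b))
    + (1 - q) * bern_expect q k' (fun b => G (false :: b))
  else G [::].

Lemma eq_bern_expect q k G1 G2 :
  (forall b, size b = k -> G1 b = G2 b) -> bern_expect q k G1 = bern_expect q k G2.
Proof.
elim: k G1 G2 => [|k IH] G1 G2 eqG /=; first exact: eqG.
by congr (_ * _ + _ * _); apply: IH => b sb; apply: eqG; rewrite /= sb.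
Qed.

Lemma bern_expect_cst q k c : bern_expect q k (fun=> c) = c.
Proof. by elim: k => [|k IH] //=; rewrite IH; ring. Qed.

Lemma bern_expectD q k G1 G2 :
  bern_expect q k (fun b => G1 b + G2 b) = bern_expect q k G1 + bern_expect q k G2.
Proof.
elim: k G1 G2 => [|k IH] G1 G2 //=.
by rewrite (IH (fun b => G1 (true :: b))) (IH (fun b => G1 (false :: b))); ring.
Qed.

Lemma bern_expectZ q k c G :
  bern_expect q k (fun b => c * G b) = c * bern_expect q k G.
Proof.
elim: k G => [|k IH] G //=.
by rewrite (IH (fun b => G (true :: b))) (IH (fun b => G (false :: b))); ring.
Qed.

Lemma bern_expect_sum q k (I : finType) (G : I -> seq bool -> R) :
  bern_expect q k (fun b => \sum_(i : I) G i b) = \sum_(i : I) bern_expect q k (G i).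
Proof.
elim: (index_enum I) => [|i s IH].
  rewrite big_nil -[RHS](bern_expect_cst q k).
  by apply: eq_bern_expect => b _; rewrite big_nil.
rewrite big_cons -IH -bern_expectD.
by apply: eq_bern_expect => b _; rewrite big_cons.
Qed.

Lemma bern_expect_drop q j k G :
  bern_expect q (j + k) (fun b => G (drop j b)) = bern_expect q k G.
Proof.
elim: j G => [|j IH] G /=; first by apply: eq_bern_expect => b _; rewrite drop0.
by rewrite (IH G); ring.
Qed.

Lemma bern_expect_take q j k G :
  bern_expect q (j + k) (fun b => G (take j b)) = bern_expect q j G.
Proof.
elim: j G => [|j IH] G /=.
  by rewrite -[RHS](bern_expect_cst q k); apply: eq_bern_expect => b _; rewrite take0.
by rewrite (IH (fun b => G (true :: b))) (IH (fun b => G (false :: b))).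
Qed.

Lemma bern_expect_block q n m i G : (i < n)%N ->
  bern_expect q (n * m) (fun b => G (take m (drop (i * m) b))) = bern_expect q m G.
Proof.
move=> lt_in; have -> : (n * m = i * m + (m + (n - i.+1) * m))%N.
  by rewrite -mulSn -mulnDl addnS -addSn subnKC.
by rewrite (bern_expect_drop q (i * m) _ (fun b => G (take m b))) bern_expect_take.
Qed.

Lemma bern_expect_count q k : bern_expect q k (fun b => (count id b)%:R) = k%:R * q.
Proof.
elim: k => [|k IH] /=; first by rewrite mul0r.
under eq_bern_expect do rewrite natrD.
under [X in _ + _ * X]eq_bern_expect do rewrite add0n.
by rewrite bern_expectD bern_expect_cst IH -natr1; ring.
Qed.

Lemma bern_expect_binomial q k (F : nat -> R) :
  bern_expect q k (fun b => F (count id b)) =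
  \sum_(l < k.+1) 'C(k, l)%:R * q ^+ l * (1 - q) ^+ (k - l) * F l.
Proof.
elim: k F => [|k IH] F.
  by rewrite /= big_ord_recl big_ord0 bin0 !expr0 addr0 !mul1r.
have success : q * \sum_(l < k.+1) 'C(k, l)%:R * q ^+ l * (1 - q) ^+ (k - l) * F l.+1
    = \sum_(l < k.+1) 'C(k, l)%:R * q ^+ l.+1 * (1 - q) ^+ (k - l) * F l.+1.
  by rewrite mulr_sumr; apply: eq_bigr => l _; rewrite exprS; ring.
have failure : (1 - q) * \sum_(l < k) 'C(k, l.+1)%:R * q ^+ l.+1 * (1 - q) ^+ (k - l.+1) * F l.+1
    = \sum_(l < k.+1) 'C(k, l.+1)%:R * q ^+ l.+1 * (1 - q) ^+ (k - l) * F l.+1.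
  rewrite [RHS]big_ord_recr /= bin_small // !mul0r addr0 mulr_sumr.
  by apply: eq_bigr => l _; rewrite -(subnSK (ltn_ord l)) [(1 - q) ^+ _.+1]exprS; ring.
rewrite /= (IH (fun c => F c.+1)) (IH F) success [X in _ + _ * X]big_ord_recl mulrDr failure.
rewrite [RHS]big_ord_recl.
under [X in _ = _ + X]eq_bigr => l _ do rewrite lift0 binS natrD !mulrDl subSS.
by rewrite big_split /= !bin0 !subn0 !expr0 [(1 - q) ^+ k.+1]exprS; ring.
Qed.

End bernoulli_expectation.

Section bernoulli_expectation_order.
Local Open Scope ring_scope.
Context {R : realDomainType}.
Implicit Types (q : R) (G : seq bool -> R).

Lemma ler_bern_expect q k G1 G2 : 0 <= q <= 1 ->
  (forall b, G1 b <= G2 b) -> bern_expect q k G1 <= bern_expect q k G2.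
Proof.
move=> /andP[q0 q1]; have q1' : 0 <= 1 - q by rewrite subr_ge0.
elim: k G1 G2 => [|k IH] G1 G2 leG //=.
by rewrite lerD // ler_wpM2l // IH.
Qed.

Lemma bern_expect_ge0 q k G : 0 <= q <= 1 ->
  (forall b, 0 <= G b) -> 0 <= bern_expect q k G.
Proof. by move=> q01 G0; rewrite -(bern_expect_cst q k 0) ler_bern_expect. Qed.

Lemma bern_expect_count_homo q q' k (F : nat -> R) :
  0 <= q -> q <= q' -> q' <= 1 -> (forall c, F c <= F c.+1) ->
  bern_expect q k (fun b => F (count id b)) <= bern_expect q' k (fun b => F (count id b)).
Proof.
move=> q0 qq' q'1; elim: k F => [|k IH] F homoF //=.
have le_succ := IH (fun c => F c.+1) (fun c => homoF c.+1).
have le_fail := IH F homoF.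
have fail_succ : bern_expect q k (fun b => F (count id b))
                 <= bern_expect q k (fun b => F (count id b).+1).
  by apply: ler_bern_expect => [|b]; [lra | exact: homoF].
(* raising [q] to [q'] moves weight to the success branch, which is the larger one *)
nra.
Qed.

End bernoulli_expectation_order.

Section sorted_samples.
Local Open Scope ring_scope.
Context {R : realDomainType}.

Local Notation sort_ge := (sort (fun x y : R => y <= x)).

Definition in01 (s : seq R) := all (fun x => 0 <= x <= 1) s.

Lemma nth_sort_ge (s : seq R) k (t : R) :
  (k < count (fun x => (t <= x)%R) s)%N -> t <= nth 0 (sort_ge s) k.
Proof.
set u := sort_ge s.
have sorted_u : sorted (fun x y => y <= x) u by apply: sort_sorted => x y; exact: le_total.
rewrite -(count_sort (fun x y : R => y <= x)) -/u => lt_k.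
rewrite leNgt; apply/negP => lt_nth.
have drop_lt : count (fun x => t <= x) (drop k u) = 0%N.
  apply/eqP; rewrite -leqn0 leqNgt -has_count; apply/hasPn => y.
  move=> /(nthP 0)[j]; rewrite size_drop ltn_subRL => lt_kj <-.
  rewrite nth_drop -ltNge; apply: le_lt_trans lt_nth.
  apply: (sorted_leq_nth ge_trans (@lexx _ R)) => //; rewrite ?inE ?leq_addr //.
  exact: leq_ltn_trans (leq_addr _ _) lt_kj.
move: lt_k; rewrite -(cat_take_drop k u) count_cat drop_lt addn0 ltnNge => /negP; apply.
by rewrite (leq_trans (count_size _ _)) // size_take_min geq_minl.
Qed.

Lemma nth_sort_in01 (s : seq R) k : in01 s -> 0 <= nth 0 (sort_ge s) k <= 1.
Proof.
move=> /allP s01; case: (ltnP k (size (sort_ge s))) => [lt_k | le_k].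
  by apply: s01; rewrite -(mem_sort (fun x y : R => y <= x)) mem_nth.
by rewrite nth_default // lexx ler01.
Qed.

Lemma nth_sort_ge_indicator (s : seq R) k (t : R) : 0 <= t -> in01 s ->
  t * (k < count (fun x => t <= x) s)%:R <= nth 0 (sort_ge s) k.
Proof.
move=> t0 s01; case: ltnP => [lt_k | _]; first by rewrite mulr1 nth_sort_ge.
by rewrite mulr0; case/andP: (nth_sort_in01 _ k s01).
Qed.

End sorted_samples.

Section integral_conull.
Context {d} {T : measurableType d} {R : realType}.
Variable mu : {measure set T -> \bar R}.
Import HBNNSimple.

(* Unlike [ae_ge0_le_integral], this needs no measurability of [f] and [g]
   (the iterated integrands of [iid_expect] are not known to be measurable):
   a simple function below [f] is cut down to [S] and then lies below [g]. *)
Lemma ge0_le_integral_conull {S : set T} (f g : T -> \bar R) :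
  measurable S -> mu (~` S) = 0 ->
  (forall x, 0 <= f x) -> (forall x, 0 <= g x) -> (forall x, S x -> f x <= g x) ->
  \int[mu]_x f x <= \int[mu]_x g x.
Proof.
move=> mS muSC f0 g0 fg; rewrite (ge0_integralTE mu f0) (ge0_integralTE mu g0) /=.
apply: ge_ereal_sup => _ [h /= hf <-].
pose hS := mul_nnsfun h (indic_nnsfun R mS).
have -> : sintegral mu h = sintegral mu hS.
  rewrite -!integralT_nnsfun; apply: ae_eq_integral => //.
  - by apply/measurable_EFinP; apply: measurable_funPT.
  - by apply/measurable_EFinP; apply: measurable_funPT.
  - exists (~` S); split => //; first exact: measurableC.
    move=> x /= neq Sx; apply: neq => _.
    by rewrite -[X in (_ * X)%:E]/(\1_S x) indicE mem_set // mulr1.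
apply: ereal_sup_ubound; exists hS => //= x; rewrite -[X in (_ * X)%:E]/(\1_S x) indicE.
have [Sx | _] := boolP (x \in S); last by rewrite mulr0 g0.
by rewrite mulr1 (le_trans (hf x)) // fg // -inE.
Qed.

Lemma le_integral_conull {S : set T} (f g : T -> \bar R) :
  measurable S -> mu (~` S) = 0 -> (forall x, S x -> f x <= g x) ->
  \int[mu]_x f x <= \int[mu]_x g x.
Proof.
move=> mS muSC fg; rewrite integralE [leRHS]integralE leeB //.
  apply: (ge0_le_integral_conull _ _ mS muSC) => [x|x|x Sx]; rewrite ?funepos_ge0 //.
  by rewrite !funeposE le_max2 // fg.
apply: (ge0_le_integral_conull _ _ mS muSC) => [x|x|x Sx]; rewrite ?funeneg_ge0 //.
by rewrite !funenegE le_max2 // leeN2 fg.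
Qed.

End integral_conull.

Section threshold_expectation.
Context {R : realType} (D : probability R R).

Definition tail_prob (t : R) : R := fine (D `[t, +oo[%classic).

Lemma tail_probE t : D `[t, +oo[%classic = (tail_prob t)%:E.
Proof. by rewrite /tail_prob fineK // fin_num_measure. Qed.

Lemma tail_prob01 t : (0 <= tail_prob t <= 1)%R.
Proof.
by rewrite -!lee_fin -tail_probE measure_ge0 probability_le1.
Qed.

Lemma prob_itv_lt t : D `]-oo, t[%classic = (1 - tail_prob t)%:E.
Proof.
rewrite -setCitvr EFinB -tail_probE; apply: probability_setC.
exact: measurable_itv.
Qed.

Lemma integral_threshold t (a b : R) : (0 <= a)%R -> (0 <= b)%R ->
  \int[D]_x (if (t <= x)%R then a else b)%:E
  = (a * tail_prob t + b * (1 - tail_prob t))%:E.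
Proof.
move=> a0 b0; set A := `[t, +oo[%classic.
have mA : measurable A by exact: measurable_itv.
have mAC : measurable (~` A) by exact: measurableC.
have mindic (B : set R) : measurable B -> measurable_fun [set: R] (EFin \o (\1_B : R -> R)).
  by move=> mB; apply/measurable_EFinP; exact: measurable_indic.
have -> : (fun x => (if (t <= x)%R then a else b)%:E) =
          (fun x => a%:E * (\1_A x)%:E + b%:E * (\1_(~` A) x)%:E).
  apply/funext => x; rewrite !indicE in_setC.
  have -> : (x \in A) = (t <= x)%R.
    by rewrite /A; apply/idP/idP; rewrite inE /= in_itv /= andbT.
  by case: ifP; rewrite /= ?mule1 ?mule0 ?adde0 ?add0e.
rewrite ge0_integralD //; first last.
- by apply: measurable_funeM; exact: mindic.
- by move=> x _; rewrite mule_ge0 // lee_fin.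
- by apply: measurable_funeM; exact: mindic.
- by move=> x _; rewrite mule_ge0 // lee_fin.
rewrite !ge0_integralZl //; try exact: mindic; try by move=> x _; rewrite lee_fin.
rewrite !integral_indic // !setIT EFinD !EFinM EFinB -tail_probE.
by congr (_ + _ * _); exact: probability_setC.
Qed.

Lemma iid_expect_cst k (c : R) : iid_expect D k (fun=> c%:E) = c%:E.
Proof.
elim: k => [//|k IH] /=; under eq_integral do rewrite IH.
by rewrite integral_cst // [X in _ * X](_ : _ = 1) ?mule1 //; exact: probability_setT.
Qed.

Lemma le_iid_expect k (g h : seq R -> \bar R) : D `[0%R, 1%R]%classic = 1 ->
  (forall s, in01 s -> g s <= h s) -> iid_expect D k g <= iid_expect D k h.
Proof.
move=> D01; have m01 : measurable (`[0%R, 1%R]%classic : set R) by exact: measurable_itv.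
have D01C : D (~` `[0%R, 1%R]%classic) = 0%E by rewrite (probability_setC D m01) D01 subee.
elim: k g h => [|k IH] g h gh /=; first exact: gh.
apply: (le_integral_conull D _ _ m01 D01C) => x x01; apply: IH => s s01; apply: gh.
by apply/andP; split; last exact: s01; move: x01; rewrite /= in_itv.
Qed.

Lemma iid_expect_threshold (t : R) k (G : seq bool -> R) : (forall b, 0 <= G b)%R ->
  iid_expect D k (fun s => (G (map (fun x => t <= x)%R s))%:E)
  = (bern_expect (tail_prob t) k G)%:E.
Proof.
set q := tail_prob t; have q01 : (0 <= q <= 1)%R := tail_prob01 t.
elim: k G => [//|k IH] G G0 /=.
have first_bit x : bern_expect q k (fun b => G ((t <= x)%R :: b)) =
    if (t <= x)%R then bern_expect q k (fun b => G (true :: b))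
    else bern_expect q k (fun b => G (false :: b)) by case: ifP.
under eq_integral => x _ do rewrite (IH (fun b => G ((t <= x)%R :: b))) // first_bit.
by rewrite integral_threshold ?bern_expect_ge0 // -/q; congr (_%:E); ring.
Qed.

End threshold_expectation.

Section scoring_rule.
Local Open Scope ring_scope.
Context {R : realType}.
Implicit Types (p : R) (n m : nat).

Lemma fp_points_bern p m k :
  fp_points p m k = bern_expect (1 - p) m (fun b => (k < count id b)%:R).
Proof.
rewrite (bern_expect_binomial (1 - p) m (fun c => (k < c)%:R)) /fp_points.
rewrite big_geq_mkord big_mkcond /=; apply: eq_bigr => l _.
by rewrite subKr; case: ifP; rewrite ?mulr1 ?mulr0.
Qed.

(* sum_k P[X > k] = E[X] for the number X of successes *)
Lemma sum_fp_points p m : \sum_(k < m) fp_points p m k = m%:R * (1 - p).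
Proof.
under eq_bigr do rewrite fp_points_bern.
rewrite -bern_expect_sum -bern_expect_count; apply: eq_bern_expect => b size_b.
have le_count : (count id b <= m)%N by rewrite -size_b count_size.
have -> : (count id b)%:R = \sum_(i < count id b) 1 :> R by rewrite sumr_const card_ord.
rewrite (big_ord_widen m (fun=> 1) le_count) [RHS]big_mkcond.
by apply: eq_bigr => i _; case: ifP.
Qed.

Lemma fp_winner_score_ge p n m (sigma : profile n m) (w : 'I_m) :
  fp_winner p sigma w -> n%:R * (1 - p) <= fp_score p sigma w.
Proof.
move=> win; have m_gt0 : (0 < m)%N by apply: leq_ltn_trans (ltn_ord w).
have per_voter i : \sum_(j < m) fp_points p m ((sigma i)^-1%g j) = m%:R * (1 - p).
  by rewrite -sum_fp_points [RHS](reindex_inj (@perm_inj _ (sigma i)^-1%g)).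
have total : \sum_(j < m) fp_score p sigma j = n%:R * (m%:R * (1 - p)).
  rewrite /fp_score exchange_big /= (eq_bigr _ (fun i _ => per_voter i)).
  by rewrite sumr_const card_ord (mulr_natl _ n).
have : \sum_(j < m) fp_score p sigma j <= m%:R * fp_score p sigma w.
  by rewrite mulr_natl -[in X in _ *+ X](card_ord m) -sumr_const ler_sum.
by rewrite total mulrCA ler_pM2l ?ltr0n.
Qed.

End scoring_rule.

Section quantile.
Context {R : realType} (D : probability R R) (p : R).
Hypothesis D01 : D `[0%R, 1%R]%classic = 1.

Lemma tail_prob0 : tail_prob D 0 = 1%R.
Proof.
apply/eqP; rewrite eq_le; case/andP: (tail_prob01 D 0) => _ -> /=.
rewrite -lee_fin -tail_probE -D01 le_measure ?inE //; try exact: measurable_itv.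
by move=> x /=; rewrite !in_itv /= => /andP[-> _].
Qed.

Lemma tail_prob_ge_of_lt_quantile t : t%:E < quantileQ D p -> (1 - p <= tail_prob D t)%R.
Proof.
move=> /ereal_sup_gt[_ [y Sy <-]]; rewrite lte_fin => lt_ty.
rewrite /= set_mem_set in Sy.
have : D `]-oo, t[%classic <= D `]-oo, y]%classic.
  rewrite le_measure ?inE //; try exact: measurable_itv.
  by move=> x /=; rewrite !in_itv /= => /ltW/le_trans; apply; apply: ltW.
by rewrite prob_itv_lt => /le_trans/(_ Sy); rewrite lee_fin lerBlDr addrC -lerBlDr.
Qed.

Lemma quantileQ_ge0 : (0 <= p)%R -> 0 <= quantileQ D p.
Proof.
move=> p0; apply/lee_subgt0Pr => e e0; rewrite sub0e.
apply: ereal_sup_ubound; exists (- e)%R => //=; rewrite set_mem_set.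
apply: le_trans (_ : D `]-oo, 0%R[%classic <= _); last first.
  by rewrite prob_itv_lt tail_prob0 subrr lee_fin.
rewrite le_measure ?inE //; try exact: measurable_itv.
by move=> x /=; rewrite !in_itv /= => /le_lt_trans; apply; rewrite oppr_lt0.
Qed.

Lemma quantileQ_le1 : (p < 1)%R -> quantileQ D p <= 1.
Proof.
move=> p1; apply: ge_ereal_sup => _ [y /= Sy <-]; rewrite lee_fin leNgt.
apply/negP => lt_1y; move: Sy; rewrite set_mem_set; apply/negP; rewrite -ltNge.
apply: lt_le_trans (_ : 1 <= _); first by rewrite lte_fin.
rewrite -D01 le_measure ?inE //; try exact: measurable_itv.
by move=> x /=; rewrite !in_itv /= => /andP[_ /le_trans]; apply; apply: ltW.
Qed.

End quantile.

Section voting_model.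
Local Open Scope ring_scope.
Context {R : realType} (D : probability R R) {n m : nat} (sigma : profile n m).
Hypothesis D01 : D `[0%R, 1%R]%classic = 1%E.

Lemma voter_samples_in01 (s : seq R) (i : 'I_n) : in01 s -> in01 (voter_samples m s i).
Proof. by move=> /allP s01; apply/allP => x /mem_take /mem_drop; exact: s01. Qed.

Lemma sw_le (s : seq R) (j : 'I_m) : in01 s -> sw sigma s j <= n%:R.
Proof.
move=> s01; rewrite /sw -[n in X in _ <= X](card_ord n) -sumr_const ler_sum // => i _.
by case/andP: (nth_sort_in01 _ ((sigma i)^-1%g j) (voter_samples_in01 _ i s01)).
Qed.

Lemma expected_sw_le (j : 'I_m) : (expected_sw D sigma j <= n%:R%:E)%E.
Proof.
rewrite /expected_sw -(iid_expect_cst D (n * m) n%:R).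
by apply: le_iid_expect => // s s01; rewrite lee_fin sw_le.
Qed.

(* The [k]-th largest of a voter's samples is at least [t] as soon as more
   than [k] of them are at least [t]. *)
Lemma expected_sw_ge_threshold (t : R) (j : 'I_m) : 0 <= t ->
  ((t * \sum_(i < n) bern_expect (tail_prob D t) m
         (fun b => ((sigma i)^-1%g j < count id b)%:R))%:E
   <= expected_sw D sigma j)%E.
Proof.
move=> t0; pose pos i := (sigma i)^-1%g j.
pose G b := t * \sum_(i < n) (pos i < count id (take m (drop (i * m) b)))%:R.
have -> : t * \sum_(i < n) bern_expect (tail_prob D t) m (fun b => (pos i < count id b)%:R)
          = bern_expect (tail_prob D t) (n * m) G.
  rewrite bern_expectZ bern_expect_sum; congr (_ * _); apply: eq_bigr => i _.
  by rewrite (bern_expect_block _ n m i (fun l => (pos i < count id l)%:R)).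
rewrite -iid_expect_threshold => [|b]; last by rewrite mulr_ge0 // sumr_ge0.
apply: le_iid_expect => // s s01; rewrite lee_fin /G /sw mulr_sumr ler_sum // => i _.
rewrite -map_drop -map_take count_map.
exact: nth_sort_ge_indicator (voter_samples_in01 _ i s01).
Qed.

Lemma expected_sw_ge_score (p t : R) (j : 'I_m) : p <= 1 -> 0 <= t ->
  1 - p <= tail_prob D t -> ((t * fp_score p sigma j)%:E <= expected_sw D sigma j)%E.
Proof.
move=> p1 t0 tail_ge; apply: le_trans (expected_sw_ge_threshold _ j t0).
rewrite lee_fin ler_wpM2l // ler_sum // => i _; rewrite fp_points_bern.
apply: (bern_expect_count_homo _ _ _ (fun c => ((sigma i)^-1%g j < c)%:R)).
- by rewrite subr_ge0.
- exact: tail_ge.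
- by case/andP: (tail_prob01 D t).
by move=> c; rewrite ler_nat; case: ltnP => // lt_c; rewrite ltnS (ltnW lt_c).
Qed.

Lemma expected_sw_winner_ge_quantile (p : R) (w : 'I_m) :
  0 < p -> p <= 1 -> fp_winner p sigma w ->
  ((1 - p)%:E * quantileQ D p * n%:R%:E <= expected_sw D sigma w)%E.
Proof.
move=> p0 p1 win.
have sw_ge t : 0 <= t -> 1 - p <= tail_prob D t ->
    ((t * (n%:R * (1 - p)))%:E <= expected_sw D sigma w)%E.
  move=> t0 tail_ge; apply: le_trans (expected_sw_ge_score _ _ w p1 t0 tail_ge).
  by rewrite lee_fin ler_wpM2l // fp_winner_score_ge.
have tail0_ge : 1 - p <= tail_prob D 0 by rewrite tail_prob0 // gerBl ltW.
have sw_ge0 : (0 <= expected_sw D sigma w)%E.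
  by have := sw_ge 0 (lexx _) tail0_ge; rewrite mul0r.
move: p1; rewrite le_eqVlt => /predU1P[-> | p_lt1]; first by rewrite subrr !mul0e.
have [Q_ge0 Q_le1] := (quantileQ_ge0 D p D01 (ltW p0), quantileQ_le1 D p D01 p_lt1).
case Q: (quantileQ D p) Q_ge0 Q_le1 => [r | // | //] r0 _; rewrite -!EFinM.
apply/lee_mul01Pr; first by rewrite lee_fin !mulr_ge0 // subr_ge0 ltW.
(* approach [Q = r] from below by the thresholds [c * r], [c < 1] *)
move=> c /andP[c0 c1]; have cr0 : 0 <= c * r by rewrite mulr_ge0 // ltW.
have tail_ge : 1 - p <= tail_prob D (c * r).
  have [-> | r_gt0] := eqVneq r 0; first by rewrite mulr0.
  by apply: tail_prob_ge_of_lt_quantile; rewrite Q lte_fin gtr_pMl // lt_neqAle eq_sym r_gt0.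
rewrite -EFinM (_ : c * _ = c * r * (n%:R * (1 - p))); last by ring.
exact: sw_ge.
Qed.

End voting_model.

Theorem corollary2 (R : realType) (p : R) (D : probability R R)
  (n m : nat) (sigma : profile n m) (w : 'I_m) :
  (0 < p)%R -> (p <= 1)%R ->
  D [set` `[0%R, 1%R]] = 1 ->
  fp_winner p sigma w ->
  expected_sw D sigma w >=
    ((1 - p)%:E * quantileQ D p) *
      \big[Order.max/-oo]_(j < m) expected_sw D sigma j.
Proof.
move=> p0 p1 D01 win; rewrite set_mem_set in D01.
apply: le_trans (expected_sw_winner_ge_quantile D sigma D01 _ _ p0 p1 win).
apply: lee_wpmul2l; first by rewrite mule_ge0 ?lee_fin ?subr_ge0 // quantileQ_ge0 // ltW.
by apply: bigmax_le => [|j _]; [exact: leNye | exact: expected_sw_le].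
Qed.
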